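(* Let $\pi$ be a projective plane of order $q$ and let $\phi$ be an embedding of the complete bipartite graph $K_{q,q}$ into $\pi$. Then for any subplane $\pi_0$ of $\pi$ of order $n$, the set of image points $\phi(V(K_{q,q}))$ contains at most $2n$ points of $\pi_0$.
   Context: A finite projective plane of order $q$ has $q^2+q+1$ points and lines, $q+1$ points on each line and $q+1$ lines through each point; any two distinct points lie on a unique line and any two lines meet in a unique point. A subplane of order $n$ is a set of points and lines of $\pi$ forming a projective plane of order $n$ under the inherited incidence. An embedding of a simple graph $G=(V,E)$ into $\pi$ is an injective map $\phi$ from $V$ to the points of $\pi$ such that the induced map sending an edge $ab$ to the line through $\phi(a),\phi(b)$ is injective on $E$. *)

From mathcomp Require Import all_boot.
Set Implicit Arguments. Unset Strict Implicit. Unset Printing Implicit Defensive.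

(* As is standard, the order of a projective plane is at least 2. *)
Definition is_proj_plane (P L : finType) (I : P -> L -> bool)
    (Ps : {set P}) (Ls : {set L}) (n : nat) : Prop :=
  2 <= n /\
  #|Ps| = n ^ 2 + n + 1 /\
  #|Ls| = n ^ 2 + n + 1 /\
  (forall l, l \in Ls -> #|[set x in Ps | I x l]| = n.+1) /\
  (forall x, x \in Ps -> #|[set l in Ls | I x l]| = n.+1) /\
  (forall x y, x \in Ps -> y \in Ps -> x != y ->
     exists! l, l \in Ls /\ I x l /\ I y l) /\
  (forall l m, l \in Ls -> m \in Ls -> l != m ->
     exists! x, x \in Ps /\ I x l /\ I x m).

Definition projective_plane (P L : finType) (I : P -> L -> bool) (q : nat) :=
  is_proj_plane I [set: P] [set: L] q.

Definition subplane (P L : finType) (I : P -> L -> bool)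
    (Ps : {set P}) (Ls : {set L}) (n : nat) :=
  is_proj_plane I Ps Ls n.

Definition line_through (P L : finType) (I : P -> L -> bool) (x y : P)
  : option L := [pick l | I x l && I y l].

Definition Kqq (q : nat) : rel ('I_q + 'I_q) :=
  fun u v => match u, v with
             | inl _, inr _ | inr _, inl _ => true
             | _, _ => false
             end.

Definition graph_embedding (V P L : finType) (adj : rel V)
    (I : P -> L -> bool) (phi : V -> P) : Prop :=
  injective phi /\
  (forall a b c d, adj a b -> adj c d ->
     line_through I (phi a) (phi b) = line_through I (phi c) (phi d) ->
     [set a; b] = [set c; d]).

(* Write A and B for the images of the two sides of K_{q,q}.  Since the q^2
   edge lines are distinct, a line through a point of A meets B at most once
   and no line meets A twice and B once.  Hence the q lines joining a point
   b of B to A are distinct, and exactly one further line through b avoids A.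
   Consequently all points of B in a subplane pi0 lie on one line, giving at
   most n + 1 of them; and if pi0 contains two points a, a' of A, the lines
   joining a to the points of B in pi0 are distinct subplane lines through a
   other than aa', giving at most n of them.  The same holds with A and B
   exchanged, and combining the cases with n >= 2 gives the bound 2n. *)

From mathcomp Require Import all_boot zify.
Set Implicit Arguments. Unset Strict Implicit.

Section ProjectivePlane.

Variables (P L : finType) (I : P -> L -> bool) (q : nat).
Hypothesis pp : projective_plane I q.

Lemma line_unique x y l1 l2 :
  x != y -> I x l1 -> I y l1 -> I x l2 -> I y l2 -> l1 = l2.
Proof.
move=> neq_xy xl1 yl1 xl2 yl2; case: pp => [_ [_ [_ [_ [_ [join _]]]]]].
have [l [_ l_uniq]] := join x y (in_setT x) (in_setT y) neq_xy.
by rewrite -(l_uniq l1) ?(l_uniq l2) ?in_setT.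
Qed.

Lemma line_throughE x y l :
  x != y -> I x l -> I y l -> line_through I x y = Some l.
Proof.
move=> neq_xy xl yl; rewrite /line_through; case: pickP => [l' /andP [xl' yl']|].
  by rewrite (line_unique neq_xy xl' yl' xl yl).
by move/(_ l); rewrite xl yl.
Qed.

Lemma line_throughP x y :
  x != y -> exists2 l, line_through I x y = Some l & I x l /\ I y l.
Proof.
move=> neq_xy; case: pp => [_ [_ [_ [_ [_ [join _]]]]]].
have [l [[_ [xl yl]] _]] := join x y (in_setT x) (in_setT y) neq_xy.
by exists l; first exact: line_throughE.
Qed.

Lemma card_lines_through x : #|[set l | I x l]| = q.+1.
Proof.
case: pp => [_ [_ [_ [_ [lines_through _]]]]].
by rewrite -(lines_through x (in_setT x)); apply: eq_card => l; rewrite !inE.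
Qed.

Lemma embedding_edges_on_line (V : finType) (adj : rel V) (phi : V -> P)
    u v u' v' l :
  graph_embedding adj I phi -> adj u v -> adj u' v' -> u != v -> u' != v' ->
  I (phi u) l -> I (phi v) l -> I (phi u') l -> I (phi v') l ->
  [set u; v] = [set u'; v'].
Proof.
move=> [phi_inj edge_inj] uv u'v' neq_uv neq_u'v' ul vl u'l v'l.
apply: edge_inj => //.
by rewrite (line_throughE _ ul vl) ?(line_throughE _ u'l v'l) ?(inj_eq phi_inj).
Qed.

Section CompleteBipartite.

Variables (m : nat) (phi : 'I_m + 'I_m -> P).
Hypothesis emb : graph_embedding (@Kqq m) I phi.

Lemma Kqq_embedding_line_abb i j j' l :
  I (phi (inl i)) l -> I (phi (inr j)) l -> I (phi (inr j')) l -> j = j'.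
Proof.
move=> ai bj bj'.
have : [set inl i; inr j] = [set inl i; inr j'] :> {set 'I_m + 'I_m}.
  by apply: (embedding_edges_on_line emb _ _ _ _ ai bj ai bj').
by move/setP/(_ (inr j)); rewrite !inE eqxx orbT => /esym /orP [] /eqP // [].
Qed.

Lemma Kqq_embedding_line_aab i i' j l :
  I (phi (inl i)) l -> I (phi (inl i')) l -> I (phi (inr j)) l -> i = i'.
Proof.
move=> ai ai' bj.
have : [set inl i; inr j] = [set inl i'; inr j] :> {set 'I_m + 'I_m}.
  by apply: (embedding_edges_on_line emb _ _ _ _ ai bj ai' bj).
by move/setP/(_ (inl i)); rewrite !inE eqxx => /esym /orP [] /eqP // [].
Qed.

End CompleteBipartite.

Section Subplane.

Variables (Ps : {set P}) (Ls : {set L}) (n : nat).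
Hypothesis sp : subplane I Ps Ls n.

Lemma subplane_line_throughP x y : x \in Ps -> y \in Ps -> x != y ->
  exists2 l, line_through I x y = Some l & [/\ l \in Ls, I x l & I y l].
Proof.
move=> xP yP neq_xy; case: sp => [_ [_ [_ [_ [_ [join _]]]]]].
have [l [[lL [xl yl]] _]] := join x y xP yP neq_xy.
by exists l; first exact: line_throughE.
Qed.

Lemma card_subplane_lines_through x : x \in Ps -> #|[set l in Ls | I x l]| = n.+1.
Proof. by case: sp => [_ [_ [_ [_ [lines_through _]]]]]; apply: lines_through. Qed.

Lemma card_subplane_points_on_line l : #|[set x in Ps | I x l]| <= n.+1.
Proof.
have [|/card_gt1P [x [y [+ + neq_xy]]]] := leqP #|[set x in Ps | I x l]| 1.
  by move/leq_trans; apply.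
rewrite !inE => /andP [xP xl] /andP [yP yl].
have [l' _ [l'L xl' yl']] := subplane_line_throughP xP yP neq_xy.
rewrite (line_unique neq_xy xl yl xl' yl').
by case: sp => [_ [_ [_ [points_on _]]]]; rewrite points_on.
Qed.

End Subplane.

Section TwoSides.

Variables (a b : 'I_q -> P).
Hypotheses (a_inj : injective a) (b_inj : injective b).
Hypothesis neq_ab : forall i j, a i != b j.
Hypothesis line_abb : forall i j j' l, I (a i) l -> I (b j) l -> I (b j') l -> j = j'.
Hypothesis line_aab : forall i i' j l, I (a i) l -> I (a i') l -> I (b j) l -> i = i'.

Definition avoids_a l := [forall i, ~~ I (a i) l].

Lemma avoids_a_line_unique j l1 l2 :
  I (b j) l1 -> I (b j) l2 -> avoids_a l1 -> avoids_a l2 -> l1 = l2.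
Proof.
move=> bl1 bl2 l1_avoids l2_avoids.
apply/eqP; apply: contraT => neq_l12.
pose join i := odflt l1 (line_through I (a i) (b j)).
have joinP i : I (a i) (join i) /\ I (b j) (join i).
  by rewrite /join; have [l -> ] := line_throughP (neq_ab i j).
have join_inj : injective join.
  move=> i i' eq_join; have [ai bj] := joinP i; have [ai' _] := joinP i'.
  by apply: (line_aab ai _ bj); rewrite eq_join.
have not_join l : avoids_a l -> l \notin join @: [set: 'I_q].
  move=> /forallP l_avoids; apply/imsetP => [[i _ eq_l]].
  by have [+ _] := joinP i; rewrite -eq_l (negbTE (l_avoids i)).
have : l1 |: (l2 |: join @: [set: 'I_q]) \subset [set l | I (b j) l].
  apply/subsetP => l; rewrite !inE => /or3P [/eqP -> | /eqP -> | /imsetP [i _ ->]] //.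
  by have [] := joinP i.
move/subset_leq_card; rewrite card_lines_through !cardsU1 card_imset //.
rewrite !inE negb_or neq_l12 !not_join //.
by rewrite cardsT card_ord ltnn.
Qed.

Lemma line_bb_avoids_a j j' l : j != j' -> I (b j) l -> I (b j') l -> avoids_a l.
Proof.
move=> neq_jj' bl bl'; apply/forallP => i; apply/negP => al.
by move: neq_jj'; rewrite (line_abb al bl bl') eqxx.
Qed.

Variables (Ps : {set P}) (Ls : {set L}) (n : nat).
Hypothesis sp : subplane I Ps Ls n.

Lemma card_b_in_subplane : #|[set j | b j \in Ps]| <= n.+1.
Proof.
have [|/card_gt1P [j0 [j1 [_ _ neq_j01]]]] := leqP #|[set j | b j \in Ps]| 1.
  by move/leq_trans; apply.
have [l _ [bj0l bj1l]] := line_throughP (contra_neq (@b_inj _ _) neq_j01).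
have l_avoids := line_bb_avoids_a neq_j01 bj0l bj1l.
have on_l k : I (b k) l.
  have [<- // | neq_j0k] := eqVneq j0 k.
  have [l' _ [bj0l' bkl']] := line_throughP (contra_neq (@b_inj _ _) neq_j0k).
  by rewrite (avoids_a_line_unique bj0l bj0l' l_avoids)
             ?(line_bb_avoids_a neq_j0k bj0l' bkl').
apply: leq_trans (card_subplane_points_on_line sp l).
rewrite -(card_imset _ b_inj); apply/subset_leq_card/subsetP => x /imsetP [k].
by rewrite !inE => bkP ->; rewrite bkP on_l.
Qed.

Lemma card_b_in_subplane_two_a :
  1 < #|[set i | a i \in Ps]| -> #|[set j | b j \in Ps]| <= n.
Proof.
case/card_gt1P => i [i' []]; rewrite !inE => aiP ai'P neq_ii'.
have [l0 _ [l0L ail0 ai'l0]] :=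
  subplane_line_throughP sp aiP ai'P (contra_neq (@a_inj _ _) neq_ii').
pose join j := odflt l0 (line_through I (a i) (b j)).
have joinP j : b j \in Ps -> [/\ join j \in Ls, I (a i) (join j) & I (b j) (join j)].
  by rewrite /join => bjP; have [l -> ] := subplane_line_throughP sp aiP bjP (neq_ab i j).
have join_inj : {in [set j | b j \in Ps] &, injective join}.
  move=> j j'; rewrite !inE => bjP bj'P eq_join.
  have [_ ai bj] := joinP j bjP; have [_ _ bj'] := joinP j' bj'P.
  by apply: (line_abb ai bj); rewrite eq_join.
have : join @: [set j | b j \in Ps] \subset [set l in Ls | I (a i) l] :\ l0.
  apply/subsetP => l /imsetP [j]; rewrite inE => bjP ->.
  have [jL ai bj] := joinP j bjP; rewrite !inE jL ai !andbT.
  apply: contra_neq neq_ii' => eq_l0.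
  by apply: (line_aab ai _ bj); rewrite eq_l0.
move/subset_leq_card; rewrite card_in_imset //.
have := cardsD1 l0 [set l in Ls | I (a i) l].
by rewrite (card_subplane_lines_through sp aiP) !inE l0L ail0 add1n => [[<-]].
Qed.

End TwoSides.

Lemma card_sides_in_subplane (a b : 'I_q -> P) Ps Ls n :
  injective a -> injective b -> (forall i j, a i != b j) ->
  (forall i j j' l, I (a i) l -> I (b j) l -> I (b j') l -> j = j') ->
  (forall i i' j l, I (a i) l -> I (a i') l -> I (b j) l -> i = i') ->
  subplane I Ps Ls n ->
  #|[set i | a i \in Ps]| + #|[set j | b j \in Ps]| <= 2 * n.
Proof.
move=> a_inj b_inj neq_ab line_abb line_aab sp.
have neq_ba j i : b j != a i by rewrite eq_sym.
have line_baa j i i' l : I (b j) l -> I (a i) l -> I (a i') l -> i = i'.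
  by move=> bj ai ai'; apply: line_aab ai ai' bj.
have line_bba j j' i l : I (b j) l -> I (b j') l -> I (a i) l -> j = j'.
  by move=> bj bj' ai; apply: line_abb ai bj bj'.
have := card_b_in_subplane b_inj neq_ab line_abb line_aab sp.
have := card_b_in_subplane a_inj neq_ba line_baa line_bba sp.
have := card_b_in_subplane_two_a a_inj neq_ab line_abb line_aab sp.
have := card_b_in_subplane_two_a b_inj neq_ba line_baa line_bba sp.
have [n_ge2 _] := sp.
lia.
Qed.

End ProjectivePlane.

Lemma card_setI_imset_sum (X Y T : finType) (f : X + Y -> T) (A : {set T}) :
  #|A :&: f @: [set: X + Y]|
    <= #|[set x | f (inl x) \in A]| + #|[set y | f (inr y) \in A]|.
Proof.
have : A :&: f @: [set: X + Y] \subset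
    (f \o inl) @: [set x | f (inl x) \in A] :|: (f \o inr) @: [set y | f (inr y) \in A].
  apply/subsetP => z; rewrite !inE => /andP [zA /imsetP [[x|y] _ eq_z]];
    rewrite eq_z in zA *.
    by rewrite (imset_f (f \o inl)) ?inE.
  by rewrite (imset_f (f \o inr)) ?inE ?orbT.
move/subset_leq_card/leq_trans; apply.
by apply: leq_trans (leq_card_setU _ _) _; apply: leq_add; apply: leq_imset_card.
Qed.

Unset Implicit Arguments.

Theorem corollary4p12 (P L : finType) (I : P -> L -> bool) (q : nat)
    (phi : 'I_q + 'I_q -> P) (Ps : {set P}) (Ls : {set L}) (n : nat) :
  projective_plane I q ->
  graph_embedding (@Kqq q) I phi ->
  subplane I Ps Ls n ->
  #|Ps :&: (phi @: [set: 'I_q + 'I_q])| <= 2 * n.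
Proof.
move=> pp emb sp; have [phi_inj _] := emb.
apply: leq_trans (card_setI_imset_sum phi Ps) _.
apply: (card_sides_in_subplane (a := fun i => phi (inl i))
                               (b := fun j => phi (inr j)) pp _ _ _ _ _ sp).
- by move=> i i' /phi_inj [].
- by move=> j j' /phi_inj [].
- by move=> i j; rewrite (inj_eq phi_inj).
- by move=> i j j' l ai bj bj'; apply: (Kqq_embedding_line_abb pp emb ai bj bj').
- by move=> i i' j l ai ai' bj; apply: (Kqq_embedding_line_aab pp emb ai ai' bj).
Qed.
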